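(* Let $C,C_1,C_2,C_3,C_4$ be circles with distinct centers $u,u_1,u_2,u_3,u_4$ such that, for each $i\in\{1,2,3,4\}$ (indices mod 4), the circles $C,C_i,C_{i+1}$ pass through a common point $P_i$, and let $\tilde P_i$ be the second intersection point of $C_i$ and $C_{i+1}$. Then $\tilde P_1,\dots,\tilde P_4$ lie on a circle $\tilde C$, and its center is the root $z=\tilde u$ different from $z=u$ of $$\frac{(u_2-z)(u_4-z)}{(u_1-z)(u_3-z)}=\frac{(u_2-u)(u_4-u)}{(u_1-u)(u_3-u)},$$ namely $$\tilde u=\frac{uu_1u_3-u_1u_2u_3-uu_2u_4+u_1u_2u_4-u_1u_3u_4+u_2u_3u_4}{uu_1-uu_2+uu_3-u_1u_3-uu_4+u_2u_4}.$$
   Context: All points are assumed in general position so that all the intersection points are distinct and the denominator is nonzero. *)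

(* the plane is modelled as a numeric closed field C
   (e.g. algC, or the complex numbers), points are elements of C. *)
From HB Require Import structures.
From mathcomp Require Import all_boot all_order all_algebra.
Set Implicit Arguments. Unset Strict Implicit. Unset Printing Implicit Defensive.
Import Order.TTheory GRing.Theory Num.Theory.
Local Open Scope ring_scope.

Definition on_circle (C : numClosedFieldType) (c : C) (r : C) (p : C) : Prop :=
  `|p - c| = r.

Definition tilde_center (C : numClosedFieldType) (u u1 u2 u3 u4 : C) : C :=
  (u*u1*u3 - u1*u2*u3 - u*u2*u4 + u1*u2*u4 - u1*u3*u4 + u2*u3*u4) /
  (u*u1 - u*u2 + u*u3 - u1*u3 - u*u4 + u2*u4).

From HB Require Import structures.
From mathcomp Require Import all_boot all_order all_algebra.
From mathcomp Require Import ring.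
Import Order.TTheory GRing.Theory Num.Theory.
Local Open Scope ring_scope.

(* We work in conjugate coordinates: a point p of the plane
   is described by p together with its conjugate p', and |p - c| = r becomes
   the polynomial relation (p - c) (p' - c') = r^2.  Treating conjugate
   coordinates as independent unknowns turns the geometry into arithmetic
   valid in any field (section ConjugateCoordinates):
   - on a circle of nonzero squared radius k a point determines its
     conjugate, p' = c' + k / (p - c);
   - two circles through the same two points x, y of the circle C of center u
     determine the conjugate of the other center;
   - the second intersection Q of two circles through P is an explicit
     rational function of P, P' and the two centers.
   With C centered at the origin, eliminating all conjugates in favour of the
   centers u_i and the points P_i, one rational identity (miquel_power_step)
   shows that Q_1 and Q_2 have the same squared distance to u~.  The formula for u~ is invariant under cyclic
   relabelling of the circles, so the same step applied to rotated data gives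
   |Q_1 - u~| = |Q_2 - u~| = |Q_3 - u~| = |Q_4 - u~|. *)

Section ConjugateCoordinates.
Context {F : fieldType}.

Definition on_ccircle (a ac k x xc : F) : Prop := (x - a) * (xc - ac) = k.

Lemma ccircle_conj_point {a ac k x xc : F} :
  k != 0 -> on_ccircle a ac k x xc -> xc = ac + k / (x - a).
Proof.
move=> hk Ex; have hx : x - a != 0.
  by apply: contraNneq hk => ha; rewrite -Ex ha mul0r.
by rewrite -Ex; field.
Qed.

Lemma ccircle_center_conj {u uc s w wc k x xc y yc : F} :
  s != 0 -> x != y ->
  on_ccircle u uc s x xc -> on_ccircle u uc s y yc ->
  on_ccircle w wc k x xc -> on_ccircle w wc k y yc ->
  wc = uc + s * (w - u) / ((x - u) * (y - u)).
Proof.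
move=> hs hxy Ex Ey Ekx Eky.
have hx : x - u != 0 by apply: contraNneq hs => hu; rewrite -Ex hu mul0r.
have hy : y - u != 0 by apply: contraNneq hs => hu; rewrite -Ey hu mul0r.
have Exc := ccircle_conj_point hs Ex; have Eyc := ccircle_conj_point hs Ey.
have : (y - x) * (wc - (uc + s * (w - u) / ((x - u) * (y - u)))) = 0.
  transitivity ((x - w) * (xc - wc) - (y - w) * (yc - wc)).
    by rewrite Exc Eyc; field; rewrite hx hy.
  by rewrite Ekx Eky subrr.
move/eqP; rewrite mulf_eq0 subr_eq0 eq_sym (negbTE hxy) /=.
by rewrite subr_eq0 => /eqP.
Qed.

Lemma ccircle_second_intersection {a ac b bc k1 k2 P Pc Q Qc : F} :
  b - a != 0 -> bc - ac != 0 -> P != Q ->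
  on_ccircle a ac k1 P Pc -> on_ccircle a ac k1 Q Qc ->
  on_ccircle b bc k2 P Pc -> on_ccircle b bc k2 Q Qc ->
  Q = a + (Pc - ac) * (b - a) / (bc - ac) /\
  Qc = ac + (P - a) * (bc - ac) / (b - a).
Proof.
move=> hab hc hPQ E1 E2 E3 E4; set w := (bc - ac) / (b - a).
(* Subtracting the circle equations gives the radical line through P and Q. *)
have radical : Qc = Pc + w * (P - Q).
  apply/eqP; rewrite -subr_eq0.
  have : (b - a) * (Qc - (Pc + w * (P - Q))) = 0.
    transitivity (((Q - a) * (Qc - ac) - (P - a) * (Pc - ac))
                 - ((Q - b) * (Qc - bc) - (P - b) * (Pc - bc))).
      by rewrite /w; field.
    by rewrite E1 E2 E3 E4 !subrr.
  by move/eqP; rewrite mulf_eq0 (negbTE hab).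
have : (Q - P) * ((Pc - ac) - w * (Q - a)) = 0.
  transitivity ((Q - a) * (Qc - ac) - (P - a) * (Pc - ac)).
    by rewrite radical; ring.
  by rewrite E1 E2 subrr.
move/eqP; rewrite mulf_eq0 subr_eq0 eq_sym (negbTE hPQ) /= subr_eq0 => /eqP EP.
have EPc : Pc = ac + w * (Q - a) by rewrite -EP; ring.
split; first by rewrite EP /w; field; rewrite hab hc.
by rewrite radical EPc /w; field.
Qed.

Definition miquel_denom (u u1 u2 u3 u4 : F) : F :=
  u*u1 - u*u2 + u*u3 - u1*u3 - u*u4 + u2*u4.

(* The center formula of the theorem, over any field; over the complex plane
   tilde_center unfolds to it. *)
Definition miquel_center (u u1 u2 u3 u4 : F) : F :=
  (u*u1*u3 - u1*u2*u3 - u*u2*u4 + u1*u2*u4 - u1*u3*u4 + u2*u3*u4) /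
  miquel_denom u u1 u2 u3 u4.

(* Relabelling the circles cyclically changes the sign of the denominator
   and of the numerator, hence fixes the center formula. *)
Lemma miquel_denom_rot (u u1 u2 u3 u4 : F) :
  miquel_denom u u2 u3 u4 u1 = - miquel_denom u u1 u2 u3 u4.
Proof. by rewrite /miquel_denom; ring. Qed.

Lemma miquel_center_rot (u u1 u2 u3 u4 : F) :
  miquel_center u u2 u3 u4 u1 = miquel_center u u1 u2 u3 u4.
Proof.
rewrite /miquel_center miquel_denom_rot.
have -> : u*u2*u4 - u2*u3*u4 - u*u3*u1 + u2*u3*u1 - u2*u4*u1 + u3*u4*u1
   = - (u*u1*u3 - u1*u2*u3 - u*u2*u4 + u1*u2*u4 - u1*u3*u4 + u2*u3*u4) by ring.
by rewrite invrN mulrNN.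
Qed.

Lemma miquel_center_root (u u1 u2 u3 u4 : F) :
  miquel_denom u u1 u2 u3 u4 != 0 ->
  let t := miquel_center u u1 u2 u3 u4 in
  (u2 - t) * (u4 - t) * ((u1 - u) * (u3 - u)) =
  (u2 - u) * (u4 - u) * ((u1 - t) * (u3 - t)).
Proof. by rewrite /miquel_center /miquel_denom => hD; field. Qed.

Lemma miquel_denom_translate (u u1 u2 u3 u4 : F) :
  miquel_denom 0 (u1 - u) (u2 - u) (u3 - u) (u4 - u) =
  miquel_denom u u1 u2 u3 u4.
Proof. by rewrite /miquel_denom; ring. Qed.

Lemma miquel_center_translate (u u1 u2 u3 u4 : F) :
  miquel_denom u u1 u2 u3 u4 != 0 ->
  miquel_center u u1 u2 u3 u4 =
  u + miquel_center 0 (u1 - u) (u2 - u) (u3 - u) (u4 - u).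
Proof.
by rewrite /miquel_center miquel_denom_translate /miquel_denom => hD; field.
Qed.

(* Let the
   points p1..p4 lie on C (squared radius s), let the conjugate centers c_i
   and conjugate points pc_i be as forced by ccircle_center_conj and
   ccircle_conj_point, and let q_i be the second intersections given by
   ccircle_second_intersection.  Then q1 and q2 have the same squared
   distance to the candidate center (t, tc). *)
Lemma miquel_power_step {s v1 v2 v3 v4 p1 p2 p3 p4 c1 c2 c3 c4
    pc1 pc2 q1 qc1 q2 qc2 : F} :
  s != 0 -> p1 != 0 -> p2 != 0 -> p3 != 0 -> p4 != 0 ->
  v2 - v1 != 0 -> v3 - v2 != 0 -> c2 - c1 != 0 -> c3 - c2 != 0 ->
  miquel_denom 0 v1 v2 v3 v4 != 0 ->
  c1 = s * v1 / (p4 * p1) -> c2 = s * v2 / (p1 * p2) ->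
  c3 = s * v3 / (p2 * p3) -> c4 = s * v4 / (p3 * p4) ->
  pc1 = s / p1 -> pc2 = s / p2 ->
  q1 = v1 + (pc1 - c1) * (v2 - v1) / (c2 - c1) ->
  qc1 = c1 + (p1 - v1) * (c2 - c1) / (v2 - v1) ->
  q2 = v2 + (pc2 - c2) * (v3 - v2) / (c3 - c2) ->
  qc2 = c2 + (p2 - v2) * (c3 - c2) / (v3 - v2) ->
  let t := miquel_center 0 v1 v2 v3 v4 in
  let tc := miquel_center 0 c1 c2 c3 c4 in
  (q1 - t) * (qc1 - tc) = (q2 - t) * (qc2 - tc).
Proof.
move=> hs h1 h2 h3 h4 h21 h32 hc21 hc32 hD Ec1 Ec2 Ec3 Ec4 -> -> -> -> -> ->.
move: hD hc21 hc32.
rewrite Ec1 Ec2 Ec3 Ec4 /miquel_center /miquel_denom !mul0r !subr0 !add0r.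
move=> hD hc21 hc32.
(* The denominators produced by clearing fractions, as products of the
   nonzero quantities at hand. *)
have Dc : - (s * v1 * (s * v3)) + s * v2 * (s * v4)
         = s * s * (- (v1 * v3) + v2 * v4) by ring.
have C32 : s * v3 * p1 + - (s * v2) * p3
         = (s * v3 / (p2 * p3) - s * v2 / (p1 * p2)) * (p1 * p2 * p3).
  by field; rewrite h1 h2 h3.
have C21 : s * v2 * p4 + - (s * v1) * p2
         = (s * v2 / (p1 * p2) - s * v1 / (p4 * p1)) * (p4 * p1 * p2).
  by field; rewrite h1 h2 h4.
field.
by rewrite Dc C32 C21 h1 h2 h3 h4 hD h21 h32 !mulf_neq0.
Qed.

End ConjugateCoordinates.

Section ComplexPlane.
Context {C : numClosedFieldType}.

Lemma on_circle_ccircle (c r p : C) :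
  on_circle c r p -> on_ccircle c c^* (r ^+ 2) p p^*.
Proof. by rewrite /on_circle /on_ccircle -rmorphB -normCK => ->. Qed.

Lemma norm_dist_eq (p q c : C) :
  (p - c) * (p^* - c^*) = (q - c) * (q^* - c^*) -> `|p - c| = `|q - c|.
Proof.
move=> E; apply/eqP; rewrite -(eqrXn2 (n:=2)) ?normr_ge0 //.
by rewrite !normCK !rmorphB E.
Qed.

Lemma tilde_center_conj (u u1 u2 u3 u4 : C) :
  (tilde_center u u1 u2 u3 u4)^* = miquel_center u^* u1^* u2^* u3^* u4^*.
Proof. by rewrite /tilde_center fmorph_div !rmorphD !rmorphN !rmorphM. Qed.

Lemma on_circle_translate (a c r p : C) :
  on_circle c r p -> on_circle (c - a) r (p - a).
Proof. by rewrite /on_circle opprB addrA subrK. Qed.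

Lemma miquel_equidistant_origin {u1 u2 u3 u4 r r1 r2 r3 r4 P1 P2 P3 P4 Q1 Q2 : C} :
  u1 != u2 -> u2 != u3 -> 0 < r ->
  on_circle 0 r P1 -> on_circle u1 r1 P1 -> on_circle u2 r2 P1 ->
  on_circle 0 r P2 -> on_circle u2 r2 P2 -> on_circle u3 r3 P2 ->
  on_circle 0 r P3 -> on_circle u3 r3 P3 -> on_circle u4 r4 P3 ->
  on_circle 0 r P4 -> on_circle u4 r4 P4 -> on_circle u1 r1 P4 ->
  on_circle u1 r1 Q1 -> on_circle u2 r2 Q1 ->
  on_circle u2 r2 Q2 -> on_circle u3 r3 Q2 ->
  P4 != P1 -> P1 != P2 -> P2 != P3 -> P3 != P4 -> P1 != Q1 -> P2 != Q2 ->
  miquel_denom 0 u1 u2 u3 u4 != 0 ->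
  `|Q1 - tilde_center 0 u1 u2 u3 u4| = `|Q2 - tilde_center 0 u1 u2 u3 u4|.
Proof.
move=> u12 u23 hr A1 B1 C1 A2 B2 C2 A3 B3 C3 A4 B4 C4 QA1 QB1 QA2 QB2
  P41 P12 P23 P34 PQ1 PQ2 hD.
have cc := @on_circle_ccircle.
have hs : r ^+ 2 != 0 by rewrite expf_neq0 // lt0r_neq0.
have nz (P : C) : on_circle 0 r P -> P != 0.
  by move=> A; apply: contraTneq hr => P0; rewrite -A P0 subr0 normr0 ltxx.
have d21 : u2 - u1 != 0 by rewrite subr_eq0 eq_sym.
have d32 : u3 - u2 != 0 by rewrite subr_eq0 eq_sym.
have conjd (a b : C) : b - a != 0 -> b^* - a^* != 0.
  by move=> h; rewrite -rmorphB conjC_eq0.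
have Ec1 := ccircle_center_conj hs P41
  (cc _ _ _ A4) (cc _ _ _ A1) (cc _ _ _ C4) (cc _ _ _ B1).
have Ec2 := ccircle_center_conj hs P12
  (cc _ _ _ A1) (cc _ _ _ A2) (cc _ _ _ C1) (cc _ _ _ B2).
have Ec3 := ccircle_center_conj hs P23
  (cc _ _ _ A2) (cc _ _ _ A3) (cc _ _ _ C2) (cc _ _ _ B3).
have Ec4 := ccircle_center_conj hs P34
  (cc _ _ _ A3) (cc _ _ _ A4) (cc _ _ _ C3) (cc _ _ _ B4).
have Ep1 := ccircle_conj_point hs (cc _ _ _ A1).
have Ep2 := ccircle_conj_point hs (cc _ _ _ A2).
rewrite conjC0 !subr0 !add0r in Ec1 Ec2 Ec3 Ec4 Ep1 Ep2.
have [Eq1 Eqc1] := ccircle_second_intersection d21 (conjd _ _ d21) PQ1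
  (cc _ _ _ B1) (cc _ _ _ QA1) (cc _ _ _ C1) (cc _ _ _ QB1).
have [Eq2 Eqc2] := ccircle_second_intersection d32 (conjd _ _ d32) PQ2
  (cc _ _ _ B2) (cc _ _ _ QA2) (cc _ _ _ C2) (cc _ _ _ QB2).
have K := miquel_power_step hs (nz _ A1) (nz _ A2) (nz _ A3) (nz _ A4)
  d21 d32 (conjd _ _ d21) (conjd _ _ d32) hD Ec1 Ec2 Ec3 Ec4 Ep1 Ep2
  Eq1 Eqc1 Eq2 Eqc2.
by apply: norm_dist_eq; rewrite tilde_center_conj conjC0.
Qed.

Lemma miquel_equidistant_step {u u1 u2 u3 u4 r r1 r2 r3 r4 P1 P2 P3 P4 Q1 Q2 : C} :
  u1 != u2 -> u2 != u3 -> 0 < r ->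
  on_circle u r P1 -> on_circle u1 r1 P1 -> on_circle u2 r2 P1 ->
  on_circle u r P2 -> on_circle u2 r2 P2 -> on_circle u3 r3 P2 ->
  on_circle u r P3 -> on_circle u3 r3 P3 -> on_circle u4 r4 P3 ->
  on_circle u r P4 -> on_circle u4 r4 P4 -> on_circle u1 r1 P4 ->
  on_circle u1 r1 Q1 -> on_circle u2 r2 Q1 ->
  on_circle u2 r2 Q2 -> on_circle u3 r3 Q2 ->
  P4 != P1 -> P1 != P2 -> P2 != P3 -> P3 != P4 -> P1 != Q1 -> P2 != Q2 ->
  miquel_denom u u1 u2 u3 u4 != 0 ->
  `|Q1 - tilde_center u u1 u2 u3 u4| = `|Q2 - tilde_center u u1 u2 u3 u4|.
Proof.
move=> u12 u23 hr A1 B1 C1 A2 B2 C2 A3 B3 C3 A4 B4 C4 QA1 QB1 QA2 QB2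
  P41 P12 P23 P34 PQ1 PQ2 hD.
have -> : tilde_center u u1 u2 u3 u4 =
    u + tilde_center 0 (u1 - u) (u2 - u) (u3 - u) (u4 - u).
  exact: miquel_center_translate.
have T := on_circle_translate u.
have T0 (P : C) : on_circle u r P -> on_circle 0 r (P - u).
  by move/T; rewrite subrr.
have ne (a b : C) : a != b -> a - u != b - u by rewrite (inj_eq (addIr (- u))).
rewrite !opprD !addrA.
apply: (miquel_equidistant_origin (ne _ _ u12) (ne _ _ u23) hr
  (T0 _ A1) (T _ _ _ B1) (T _ _ _ C1) (T0 _ A2) (T _ _ _ B2) (T _ _ _ C2)
  (T0 _ A3) (T _ _ _ B3) (T _ _ _ C3) (T0 _ A4) (T _ _ _ B4) (T _ _ _ C4)
  (T _ _ _ QA1) (T _ _ _ QB1) (T _ _ _ QA2) (T _ _ _ QB2)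
  (ne _ _ P41) (ne _ _ P12) (ne _ _ P23) (ne _ _ P34) (ne _ _ PQ1) (ne _ _ PQ2)).
by rewrite miquel_denom_translate.
Qed.

End ComplexPlane.

Lemma uniq_nth_neq {T : eqType} (x0 : T) {s : seq T} (i j : nat) :
  uniq s -> (i < size s)%N -> (j < size s)%N -> i != j ->
  nth x0 s i != nth x0 s j.
Proof. by move=> U hi hj; rewrite nth_uniq. Qed.

Theorem mainTheorem10 (C : numClosedFieldType)
  (u u1 u2 u3 u4 : C) (r r1 r2 r3 r4 : C)
  (P1 P2 P3 P4 Q1 Q2 Q3 Q4 : C) :
  (* distinct centers *)
  uniq [:: u; u1; u2; u3; u4] ->
  (* genuine circles: positive real radii *)
  0 < r -> 0 < r1 -> 0 < r2 -> 0 < r3 -> 0 < r4 ->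
  (* C, C_i, C_{i+1} pass through the common point P_i (indices mod 4) *)
  on_circle u r P1 -> on_circle u1 r1 P1 -> on_circle u2 r2 P1 ->
  on_circle u r P2 -> on_circle u2 r2 P2 -> on_circle u3 r3 P2 ->
  on_circle u r P3 -> on_circle u3 r3 P3 -> on_circle u4 r4 P3 ->
  on_circle u r P4 -> on_circle u4 r4 P4 -> on_circle u1 r1 P4 ->
  (* Q_i (= tilde P_i) is an intersection point of C_i and C_{i+1} *)
  on_circle u1 r1 Q1 -> on_circle u2 r2 Q1 ->
  on_circle u2 r2 Q2 -> on_circle u3 r3 Q2 ->
  on_circle u3 r3 Q3 -> on_circle u4 r4 Q3 ->
  on_circle u4 r4 Q4 -> on_circle u1 r1 Q4 ->
  (* general position: all these intersection points are distinct
     (in particular Q_i is the second intersection point, Q_i <> P_i) *)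
  uniq [:: P1; P2; P3; P4; Q1; Q2; Q3; Q4] ->
  (* general position: nonzero denominator *)
  u*u1 - u*u2 + u*u3 - u1*u3 - u*u4 + u2*u4 != 0 ->
  let ut := tilde_center u u1 u2 u3 u4 in
  (* Q1..Q4 lie on a circle centered at ut *)
  (exists rt : C, [/\ on_circle ut rt Q1, on_circle ut rt Q2,
                      on_circle ut rt Q3 & on_circle ut rt Q4])
  /\
  (* ut is a root of the (cleared) equation
     (u2-z)(u4-z)/((u1-z)(u3-z)) = (u2-u)(u4-u)/((u1-u)(u3-u)) *)
  (u2 - ut) * (u4 - ut) * ((u1 - u) * (u3 - u)) =
  (u2 - u) * (u4 - u) * ((u1 - ut) * (u3 - ut)).
Proof.
move=> Hu hr _ _ _ _ A1 B1 C1 A2 B2 C2 A3 B3 C3 A4 B4 C4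
  QA1 QB1 QA2 QB2 QA3 QB3 QA4 QB4 HP hD ut.
split; last exact: miquel_center_root.
have u12 : u1 != u2 by apply: (uniq_nth_neq 0 1 2 Hu).
have u23 : u2 != u3 by apply: (uniq_nth_neq 0 2 3 Hu).
have u34 : u3 != u4 by apply: (uniq_nth_neq 0 3 4 Hu).
have u41 : u4 != u1 by apply: (uniq_nth_neq 0 4 1 Hu).
have P12 : P1 != P2 by apply: (uniq_nth_neq 0 0 1 HP).
have P23 : P2 != P3 by apply: (uniq_nth_neq 0 1 2 HP).
have P34 : P3 != P4 by apply: (uniq_nth_neq 0 2 3 HP).
have P41 : P4 != P1 by apply: (uniq_nth_neq 0 3 0 HP).
have PQ1 : P1 != Q1 by apply: (uniq_nth_neq 0 0 4 HP).
have PQ2 : P2 != Q2 by apply: (uniq_nth_neq 0 1 5 HP).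
have PQ3 : P3 != Q3 by apply: (uniq_nth_neq 0 2 6 HP).
have PQ4 : P4 != Q4 by apply: (uniq_nth_neq 0 3 7 HP).
have hD2 : miquel_denom u u2 u3 u4 u1 != 0 by rewrite miquel_denom_rot oppr_eq0.
have hD3 : miquel_denom u u3 u4 u1 u2 != 0.
  by rewrite miquel_denom_rot (miquel_denom_rot u u1) opprK.
have E12 := miquel_equidistant_step u12 u23 hr A1 B1 C1 A2 B2 C2 A3 B3 C3 A4 B4 C4
  QA1 QB1 QA2 QB2 P41 P12 P23 P34 PQ1 PQ2 hD.
have E23 := miquel_equidistant_step u23 u34 hr A2 B2 C2 A3 B3 C3 A4 B4 C4 A1 B1 C1
  QA2 QB2 QA3 QB3 P12 P23 P34 P41 PQ2 PQ3 hD2.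
have E34 := miquel_equidistant_step u34 u41 hr A3 B3 C3 A4 B4 C4 A1 B1 C1 A2 B2 C2
  QA3 QB3 QA4 QB4 P23 P34 P41 P12 PQ3 PQ4 hD3.
have rot2 : tilde_center u u2 u3 u4 u1 = ut := miquel_center_rot u u1 u2 u3 u4.
have rot3 : tilde_center u u3 u4 u1 u2 = ut.
  by rewrite -rot2; exact: miquel_center_rot.
rewrite rot2 in E23; rewrite rot3 in E34.
exists `|Q1 - ut|; split; rewrite /on_circle.
- by [].
- by rewrite E12.
- by rewrite E12 E23.
- by rewrite E12 E23 E34.
Qed.
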